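(* Let $Y$ be an $n\times n$ matrix each of whose entries is either $0$ or an indeterminate, with distinct nonzero entries being distinct indeterminates over a field $K$, and suppose that the graph $G(Y)$ is a cycle of length $2n$. For $k\ge1$ let $J_k$ be the ideal of $k$-minors of $Y$. Then for all $k<n$, $$J_k=\Big(\prod_{v\in A}v \;:\; A \text{ an independent set of } G(Y) \text{ with } |A|=k\Big).$$
   Context: For a matrix $Z=(z_{ij})$, the graph $G(Z)$ has as vertices the nonzero entries $z_{ij}$, and two vertices $z_{ij},z_{hk}$ are adjacent iff $i=h$ or $j=k$. An independent set is a set of pairwise non-adjacent vertices. *)

From HB Require Import structures.
From mathcomp Require Import all_boot all_order all_algebra.
From mathcomp Require Import mpoly.
Set Implicit Arguments. Unset Strict Implicit. Unset Printing Implicit Defensive.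
Import GRing.Theory.
Local Open Scope ring_scope.

(* Support of a matrix: positions of nonzero entries = vertices of G(Z). *)
Definition mxsupp (R : nzRingType) (n : nat) (Z : 'M[R]_n) : {set 'I_n * 'I_n} :=
  [set u | Z u.1 u.2 != 0].

Definition mxadj (n : nat) (u v : 'I_n * 'I_n) : bool :=
  (u != v) && ((u.1 == v.1) || (u.2 == v.2)).

Definition mx_indep (R : nzRingType) (n : nat) (Z : 'M[R]_n) (A : {set 'I_n * 'I_n}) :=
  A \subset mxsupp Z /\ forall u v, u \in A -> v \in A -> ~~ mxadj u v.

Definition is_cycle_graph (T : finType) (V : {set T}) (adj : rel T) (L : nat) :=
  exists f : 'I_L -> T,
    [/\ injective f,
        (forall v, v \in V <-> exists a, f a = v)
      & forall a b : 'I_L,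
          adj (f a) (f b) = ((val b == (val a).+1 %% L)%N || (val a == (val b).+1 %% L)%N)].

Definition is_minor (R : comNzRingType) (n k : nat) (Z : 'M[R]_n) (p : R) :=
  exists (f g : 'I_k -> 'I_n),
    [/\ {homo f : x y / (x < y)%N >-> (x < y)%N},
        {homo g : x y / (x < y)%N >-> (x < y)%N}
      & p = \det (\matrix_(i, j) Z (f i) (g j))].

Definition in_ideal_gen (R : comNzRingType) (P : R -> Prop) (p : R) :=
  exists s : seq (R * R), (forall q, q \in s -> P q.2) /\
    p = \sum_(q <- s) q.1 * q.2.

From HB Require Import structures.
From mathcomp Require Import all_boot all_order all_algebra.
From mathcomp Require Import mpoly.
From mathcomp Require Import fingroup perm.
Set Implicit Arguments. Unset Strict Implicit. Unset Printing Implicit Defensive.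
Import GRing.Theory.
Local Open Scope ring_scope.

(* Every term of the Leibniz expansion of a k-minor is, up to sign, the
   product over an independent set of k cells, so J_k lies in the monomial
   ideal.  Conversely, an independent set A of k cells is the transversal of a
   permutation s of the k x k submatrix it spans.  If another permutation t
   also gave a nonzero term, the cells where s and t differ would form a
   nonempty set of at most 2k < 2n vertices of G(Y), each with two neighbours
   inside the set (one in its row, one in its column); in a cycle such a set
   is the whole cycle, which is impossible.  Hence the minor is +-prod A. *)

Section IdealGen.
Variable R : comNzRingType.
Implicit Types P Q : R -> Prop.

Lemma in_ideal_gen0 P : in_ideal_gen P 0.
Proof. by exists [::]; rewrite big_nil. Qed.

Lemma in_ideal_genD P a b :
  in_ideal_gen P a -> in_ideal_gen P b -> in_ideal_gen P (a + b).
Proof.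
case=> [s1 [P_s1 ->]] [s2 [P_s2 ->]]; exists (s1 ++ s2); rewrite big_cat.
by split=> // q; rewrite mem_cat => /orP[/P_s1|/P_s2].
Qed.

Lemma in_ideal_genMl P c a : in_ideal_gen P a -> in_ideal_gen P (c * a).
Proof.
case=> [s [P_s ->]]; exists [seq (c * q.1, q.2) | q <- s]; split.
  by move=> _ /mapP[q /P_s P_q ->].
by rewrite big_map mulr_sumr; apply: eq_bigr => q _; rewrite mulrA.
Qed.

Lemma in_ideal_gen_mem P q : P q -> in_ideal_gen P q.
Proof.
move=> P_q; exists [:: (1, q)]; rewrite big_seq1 mul1r.
by split=> // _ /[!inE]/eqP->.
Qed.

Lemma in_ideal_gen_sum P (I : Type) (r : seq I) (F : I -> R) :
  (forall i, in_ideal_gen P (F i)) -> in_ideal_gen P (\sum_(i <- r) F i).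
Proof.
move=> P_F; elim: r => [|i r IHr]; first by rewrite big_nil; exact: in_ideal_gen0.
by rewrite big_cons; apply: in_ideal_genD.
Qed.

Lemma in_ideal_gen_trans P Q p : (forall q, P q -> in_ideal_gen Q q) ->
  in_ideal_gen P p -> in_ideal_gen Q p.
Proof.
move=> PQ [s [P_s ->]]; elim: s P_s => [|q s IHs] P_s.
  by rewrite big_nil; exact: in_ideal_gen0.
rewrite big_cons; apply: in_ideal_genD.
  by apply/in_ideal_genMl/PQ/P_s; rewrite mem_head.
by apply: IHs => q' q's; apply: P_s; rewrite inE q's orbT.
Qed.

End IdealGen.

Lemma iter_ordS L (a : 'I_L) t : val (iter t (@ordS L) a) = ((a + t) %% L)%N.
Proof.
elim: t => [|t IHt] /=; first by rewrite addn0 modn_small.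
by rewrite IHt -addn1 modnDml addn1 addnS.
Qed.

Lemma ordS_closed_setT L (B : {set 'I_L}) a :
  a \in B -> {homo @ordS L : b / b \in B} -> B = setT.
Proof.
move=> aB BS; apply/setP => b; rewrite inE.
have -> : b = iter (b + (L - a)) (@ordS L) a.
  apply: val_inj; rewrite iter_ordS addnCA subnKC; last exact: ltnW.
  by rewrite modnDr modn_small.
by elim: (_ + _)%N => //= t; apply: BS.
Qed.

Lemma cycle_graph_card_closed (T : finType) (V : {set T}) (adj : rel T) L
    (S : {set T}) :
  is_cycle_graph V adj L -> S \subset V -> S != set0 ->
  (forall v, v \in S ->
     exists u w, [/\ u \in S, w \in S, u != w, adj v u & adj v w]) ->
  (L <= #|S|)%N.
Proof.
case=> F [F_inj F_onto F_adj] sSV /set0Pn[v0 v0S] S_nbrs.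
have adjE a b : adj (F a) (F b) = (b == ordS a) || (a == ordS b) by rewrite F_adj.
have S_imF v : v \in S -> exists a, F a = v by move=> /(subsetP sSV)/F_onto.
have [a0 Fa0] := S_imF v0 v0S.
have preS_full : F @^-1: S = setT.
  apply: (@ordS_closed_setT _ _ a0); first by rewrite inE Fa0.
  move=> a /[!inE] /S_nbrs[u [w [uS wS uw au aw]]].
  have [[b Fb] [c Fc]] := (S_imF u uS, S_imF w wS).
  have [<-|b_ne] := eqVneq b (ordS a); first by rewrite Fb.
  have [<-|c_ne] := eqVneq c (ordS a); first by rewrite Fc.
  move: au aw; rewrite -Fb -Fc !adjE (negbTE b_ne) (negbTE c_ne).
  move=> /eqP ab /eqP ac.
  by move: uw; rewrite -Fb -Fc (ordS_inj (etrans (esym ab) ac)) eqxx.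
rewrite -[L]card_ord -cardsT -preS_full -(card_imset _ F_inj).
by apply/subset_leq_card/subsetP => _ /imsetP[a /[!inE] FaS ->].
Qed.

Lemma incr_ord_inj k n (f : 'I_k -> 'I_n) :
  {homo f : x y / (x < y)%N >-> (x < y)%N} -> injective f.
Proof.
move=> f_incr i j fij; apply: val_inj.
by case: (ltngtP i j) => // /f_incr; rewrite fij ltnn.
Qed.

Lemma incr_perm_factor k n (h : 'I_k -> 'I_n) : injective h ->
  exists (f : 'I_k -> 'I_n) (p : {perm 'I_k}),
    {homo f : x y / (x < y)%N >-> (x < y)%N} /\ forall i, h i = f (p i).
Proof.
case: k h => [|k] h h_inj; first by exists h, 1%g; split=> [[]|[]].
pose A := h @: [set: 'I_k.+1].
have cardA : #|A| = k.+1 by rewrite card_imset // cardsT card_ord.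
have hA0 : h ord0 \in A by apply: imset_f.
pose f i := Order.enum_val (cast_ord (esym cardA) i) : 'I_n.
pose p i := cast_ord cardA (Order.enum_rank_in hA0 (h i)).
have fp i : f (p i) = h i.
  by rewrite /f /p cast_ordK Order.enum_rankK_in ?imset_f.
have p_inj : injective p by move=> i j pij; apply: h_inj; rewrite -!fp pij.
have le_f a b : (f a <= f b)%N = (a <= b)%N.
  exact: (@Order.EnumVal.le_enum_val _ _ Order.le_total A).
exists f, (perm p_inj); split=> [i j|i]; last by rewrite permE fp.
by rewrite !ltnNge le_f.
Qed.

Section PermCells.
Variables (n k : nat) (f g : 'I_k -> 'I_n).

Definition perm_cells (s : {perm 'I_k}) : {set 'I_n * 'I_n} :=
  [set (f i, g (s i)) | i : 'I_k].

Definition perm_cells_diff (s t : {perm 'I_k}) : {set 'I_n * 'I_n} :=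
  [set (f i, g (s i)) | i in [set i | s i != t i]].

Lemma det_submx (R : comNzRingType) (Y : 'M[R]_n) :
  \det (\matrix_(i, j) Y (f i) (g j)) =
  \sum_(s : 'S_k) (-1) ^+ s * \prod_i Y (f i) (g (s i)).
Proof. by apply: eq_bigr => s _; under eq_bigr do rewrite mxE. Qed.

Lemma prod_perm_cells_eq0 (R : comNzRingType) (Y : 'M[R]_n) s :
  ~~ (perm_cells s \subset mxsupp Y) -> \prod_i Y (f i) (g (s i)) = 0.
Proof.
case/subsetPn => _ /imsetP[i _ ->]; rewrite inE negbK => /eqP Y0.
by rewrite (bigD1 i) //= Y0 mul0r.
Qed.

Hypotheses (f_inj : injective f) (g_inj : injective g).

Lemma card_perm_cells s : #|perm_cells s| = k.
Proof. by rewrite card_imset ?card_ord // => i j [/f_inj]. Qed.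

Lemma prod_perm_cells (R : comNzRingType) (Y : 'M[R]_n) s :
  \prod_(v in perm_cells s) Y v.1 v.2 = \prod_i Y (f i) (g (s i)).
Proof. by rewrite big_imset //= => i j _ _ [/f_inj]. Qed.

Lemma perm_cells_indep s u v :
  u \in perm_cells s -> v \in perm_cells s -> ~~ mxadj u v.
Proof.
move=> /imsetP[i _ ->] /imsetP[j _ ->]; rewrite /mxadj /= xpair_eqE.
have [->|ij] := eqVneq i j; first by rewrite !eqxx.
by rewrite (inj_eq f_inj) (inj_eq g_inj) (inj_eq perm_inj) (negbTE ij) andbF.
Qed.

Lemma perm_cells_diff_neighbours s t v :
  v \in perm_cells_diff s t ->
  exists u w, [/\ u \in perm_cells_diff t s, w \in perm_cells_diff t s,
                  u != w, mxadj v u & mxadj v w].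
Proof.
case/imsetP=> i /[!inE] st_i ->; pose j := (t^-1)%g (s i).
have tj : t j = s i by rewrite permKV.
have ji : j != i by apply: contraNneq st_i => ji; rewrite -tj ji.
have ts_j : t j != s j by rewrite tj (inj_eq perm_inj) eq_sym.
exists (f i, g (t i)), (f j, g (t j)); split.
- by apply: imset_f; rewrite inE eq_sym.
- by apply: imset_f; rewrite inE.
- by rewrite xpair_eqE (inj_eq f_inj) eq_sym (negbTE ji).
- by rewrite /mxadj /= xpair_eqE (inj_eq g_inj) (negbTE st_i) andbF eqxx.
- by rewrite /mxadj /= xpair_eqE (inj_eq f_inj) eq_sym (negbTE ji) tj eqxx orbT.
Qed.

Lemma perm_cells_cycle_uniq (R : nzRingType) (Y : 'M[R]_n) L :
  is_cycle_graph (mxsupp Y) (@mxadj n) L -> (2 * k < L)%N ->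
  forall s t, perm_cells s \subset mxsupp Y -> perm_cells t \subset mxsupp Y ->
  s = t.
Proof.
move=> Y_cycle kL s t sY tY.
set S := perm_cells_diff s t :|: perm_cells_diff t s.
have cardS : (#|S| <= 2 * k)%N.
  rewrite mul2n -addnn (leq_trans (leq_card_setU _ _)) // leq_add //;
    by rewrite (leq_trans (leq_imset_card _ _)) // (leq_trans (max_card _)) ?card_ord.
have S0 : S = set0.
  apply/eqP; apply: contraTT kL => S_ne0; rewrite -leqNgt.
  apply: leq_trans cardS; apply: (cycle_graph_card_closed Y_cycle) => //.
    by apply/subUsetP; split; [apply: subset_trans sY | apply: subset_trans tY];
      apply: imsetS; apply/subsetP.
  move=> v; rewrite /S inE => /orP[] /perm_cells_diff_neighbours[u [w [uS wS]]];
    by exists u, w; rewrite !inE ?uS ?wS ?orbT.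
apply/permP => i; apply/eqP; apply: contraT => st_i.
suff : (f i, g (s i)) \in S by rewrite S0 inE.
by rewrite !inE; apply/orP; left; apply: imset_f; rewrite inE.
Qed.

End PermCells.

Lemma indep_perm_cells n (A : {set 'I_n * 'I_n}) :
  (forall u v, u \in A -> v \in A -> ~~ mxadj u v) ->
  exists (f g : 'I_#|A| -> 'I_n) (s : {perm 'I_#|A|}),
    [/\ {homo f : x y / (x < y)%N >-> (x < y)%N},
        {homo g : x y / (x < y)%N >-> (x < y)%N} & A = perm_cells f g s].
Proof.
move=> A_indep; pose e (i : 'I_#|A|) := enum_val i.
have eA i : e i \in A by apply: enum_valP.
have e_inj : injective e by apply: enum_val_inj.
have row_inj : injective (fun i => (e i).1).
  move=> i j eij; apply/e_inj/eqP; apply: contraT => ij.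
  by have := A_indep _ _ (eA i) (eA j); rewrite /mxadj ij eij eqxx.
have col_inj : injective (fun i => (e i).2).
  move=> i j eij; apply/e_inj/eqP; apply: contraT => ij.
  by have := A_indep _ _ (eA i) (eA j); rewrite /mxadj ij eij eqxx orbT.
have [f [pr [f_incr e_row]]] := incr_perm_factor row_inj.
have [g [pc [g_incr e_col]]] := incr_perm_factor col_inj.
exists f, g, (pr^-1 * pc)%g; split=> //.
have [f_inj g_inj] := (incr_ord_inj f_incr, incr_ord_inj g_incr).
apply/eqP; rewrite eq_sym eqEcard card_perm_cells // leqnn andbT.
apply/subsetP => _ /imsetP[i _ ->]; rewrite -(permKV pr i) permM permK.
by rewrite -e_row -e_col -surjective_pairing.
Qed.

Section Minors.
Variables (R : comNzRingType) (n : nat) (Y : 'M[R]_n).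

Definition indep_monomial k (q : R) :=
  exists A : {set 'I_n * 'I_n},
    [/\ mx_indep Y A, #|A| = k & q = \prod_(v in A) Y v.1 v.2].

Lemma minor_in_indep_monomial_ideal k q :
  is_minor k Y q -> in_ideal_gen (indep_monomial k) q.
Proof.
case=> f [g [f_incr g_incr ->]].
have [f_inj g_inj] := (incr_ord_inj f_incr, incr_ord_inj g_incr).
rewrite det_submx; apply: in_ideal_gen_sum => s.
have [sY|/prod_perm_cells_eq0 ->] := boolP (perm_cells f g s \subset mxsupp Y);
  last by rewrite mulr0; apply: in_ideal_gen0.
apply/in_ideal_genMl/in_ideal_gen_mem; exists (perm_cells f g s).
by rewrite card_perm_cells // prod_perm_cells //; split=> //; split=> // u v;
  apply: perm_cells_indep.
Qed.

Lemma indep_monomial_in_minor_ideal L k q :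
  is_cycle_graph (mxsupp Y) (@mxadj n) L -> (2 * k < L)%N ->
  indep_monomial k q -> in_ideal_gen (is_minor k Y) q.
Proof.
move=> Y_cycle kL [A [[AY A_indep] cardA ->]]; subst k.
have [f [g [s [f_incr g_incr As]]]] := indep_perm_cells A_indep.
have [f_inj g_inj] := (incr_ord_inj f_incr, incr_ord_inj g_incr).
have sY : perm_cells f g s \subset mxsupp Y by rewrite -As.
have det_s : \det (\matrix_(i, j) Y (f i) (g j)) =
             (-1) ^+ s * \prod_(v in A) Y v.1 v.2.
  rewrite det_submx (bigD1 s) //= [X in _ + X]big1 ?addr0 => [|t ts].
    by rewrite -prod_perm_cells // -As.
  have [tY|/prod_perm_cells_eq0 ->] := boolP (perm_cells f g t \subset mxsupp Y);
    last by rewrite mulr0.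
  by rewrite (perm_cells_cycle_uniq f_inj g_inj Y_cycle kL tY sY) eqxx in ts.
rewrite -(signrMK s (\prod_(v in A) _)) -det_s.
by apply/in_ideal_genMl/in_ideal_gen_mem; exists f, g.
Qed.

End Minors.

Theorem lemma8p2 (K : fieldType) (m n : nat) (Y : 'M[{mpoly K[m]}]_n)
  (Yent : forall i j, Y i j = 0 \/ exists l : 'I_m, Y i j = 'X_l)
  (Ydist : forall i j i' j', Y i j != 0 -> Y i j = Y i' j' -> i = i' /\ j = j')
  (Ycyc : is_cycle_graph (mxsupp Y) (@mxadj n) (2 * n))
  (k : nat) (k_ge1 : (1 <= k)%N) (k_ltn : (k < n)%N) :
  forall p : {mpoly K[m]},
    in_ideal_gen (is_minor k Y) p <->
    in_ideal_gen (fun q => exists A : {set 'I_n * 'I_n},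
                     [/\ mx_indep Y A, #|A| = k & q = \prod_(v in A) Y v.1 v.2]) p.
Proof.
move=> p; split; apply: in_ideal_gen_trans => q.
  exact: minor_in_indep_monomial_ideal.
by apply: (indep_monomial_in_minor_ideal Ycyc); rewrite ltn_pmul2l.
Qed.
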